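(* Let $X$ be a locally compact Hausdorff space, let $M$ be a countably generated Hilbert $C_0(X)$-module, and let $U,V\subseteq X$ be $\sigma$-compact open sets with $V$ compactly contained in $U$ (i.e. $\overline V$ compact and $\overline V\subseteq U$). If $F$ is a submodule of $MC_0(V)$ that is a direct summand of $MC_0(U)$ (i.e. $MC_0(U)=F+ (F^\perp\cap MC_0(U))$), then $F$ is a direct summand of $M$, i.e. $M=F+F^\perp$.
   Context: $F^\perp$ denotes the orthogonal complement with respect to the $C_0(X)$-valued inner product. $MC_0(U)$ denotes the closed submodule $\overline{\mathrm{span}}\{m f: m\in M,\ f\in C_0(U)\}$. *)

From HB Require Import structures.
From mathcomp Require Import all_boot all_order all_algebra.
From mathcomp Require Import complex.
From mathcomp Require Import all_classical all_reals topology normedtype.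
Import Order.TTheory GRing.Theory Num.Theory.

Set Implicit Arguments. Unset Strict Implicit. Unset Printing Implicit Defensive.

Local Open Scope classical_set_scope.
Local Open Scope ring_scope.

Definition cmod (R : realType) (z : R[i]) : R := Normc.normc z.

Definition locally_compact_hausdorff (X : topologicalType) : Prop :=
  hausdorff_space X /\ (forall x : X, exists K : set X, nbhs x K /\ compact K).

Definition sigma_compact_open (X : topologicalType) (U : set X) : Prop :=
  open U /\ exists K : nat -> set X, (forall n, compact (K n)) /\ U = \bigcup_n K n.

Definition compactly_contained (X : topologicalType) (V U : set X) : Prop :=
  compact (closure V) /\ closure V `<=` U.

Definition ccontinuous (R : realType) (X : topologicalType) (f : X -> R[i]) : Prop :=
  forall (x : X) (e : R), 0 < e -> nbhs x [set y | cmod (f y - f x) < e].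

Definition C0 (R : realType) (X : topologicalType) (f : X -> R[i]) : Prop :=
  ccontinuous f /\ forall e : R, 0 < e -> compact [set x | e <= cmod (f x)].

(** C_0(U) for U open in X, viewed as the ideal of C_0(X) of functions
    vanishing outside U. *)
Definition C0on (R : realType) (X : topologicalType) (U : set X) (f : X -> R[i]) : Prop :=
  C0 f /\ (forall x, ~ U x -> f x = 0).

(** Hilbert C_0(X)-module structure on a complex vector space M:
    right action [act] of C_0(X), C_0(X)-valued inner product [ip]
    (linear in the second variable), complete for the norm
    ||m|| = ||<m,m>||_oo ^ (1/2). *)
Record hilbert_C0_module (R : realType) (X : topologicalType) (M : lmodType R[i]) := {
  act : M -> (X -> R[i]) -> M;
  ip : M -> M -> X -> R[i];
  act_addl : forall m n f, C0 f -> act (m + n) f = act m f + act n f;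
  act_addr : forall m f g, C0 f -> C0 g -> act m (f \+ g) = act m f + act m g;
  act_mul : forall m f g, C0 f -> C0 g -> act m (f \* g) = act (act m f) g;
  act_scalel : forall (a : R[i]) m f, C0 f -> act (a *: m) f = a *: act m f;
  act_scaler : forall (a : R[i]) m f, C0 f -> act m (fun x => a * f x) = a *: act m f;
  ip_C0 : forall m n, C0 (ip m n);
  ip_linear : forall (a : R[i]) m n1 n2 x,
      ip m (a *: n1 + n2) x = a * ip m n1 x + ip m n2 x;
  ip_act : forall m n f x, C0 f -> ip m (act n f) x = ip m n x * f x;
  ip_sym : forall m n x, ip n m x = (ip m n x)^*%C;
  ip_pos : forall m x, 0 <= ip m m x;
  ip_def : forall m, (forall x, ip m m x = 0) -> m = 0;
  complete : forall u : nat -> M,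
      (forall e : R, 0 < e -> exists N, forall p q, (N <= p)%N -> (N <= q)%N ->
         forall x, cmod (ip (u p - u q) (u p - u q) x) <= e) ->
      exists l : M, forall e : R, 0 < e -> exists N, forall p, (N <= p)%N ->
         forall x, cmod (ip (u p - l) (u p - l) x) <= e
}.

Section HM.
Variables (R : realType) (X : topologicalType) (M : lmodType R[i])
          (H : hilbert_C0_module X M).

(** ||m - m'||^2 <= e *)
Definition close (m m' : M) (e : R) : Prop :=
  forall x, cmod (ip H (m - m') (m - m') x) <= e.

Definition countably_generated : Prop :=
  exists g : nat -> M, forall (m : M) (e : R), 0 < e ->
    exists (n : nat) (k : 'I_n -> nat) (f : 'I_n -> X -> R[i]),
      (forall i, C0 (f i)) /\ close m (\sum_(i < n) act H (g (k i)) (f i)) e.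

(** M C_0(U) = closed span of { m f | m in M, f in C_0(U) }. *)
Definition MC0 (U : set X) : set M :=
  [set m | forall e : R, 0 < e ->
    exists (n : nat) (ms : 'I_n -> M) (f : 'I_n -> X -> R[i]),
      (forall i, C0on U (f i)) /\ close m (\sum_(i < n) act H (ms i) (f i)) e].

Definition submodule (F : set M) : Prop :=
  F 0 /\ (forall m n, F m -> F n -> F (m + n)) /\
  (forall (a : R[i]) m, F m -> F (a *: m)) /\
  (forall m f, F m -> C0 f -> F (act H m f)).

Definition orth (F : set M) : set M :=
  [set m | forall n, F n -> forall x, ip H n m x = 0].

Definition is_sum (A F G : set M) : Prop :=
  forall m, A m <-> exists a b, F a /\ G b /\ m = a + b.

End HM.

From mathcomp Require Import all_boot all_order all_algebra.
From mathcomp Require Import complex.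
From mathcomp Require Import all_classical all_reals topology normedtype.
From mathcomp Require Import ring lra.
Import Order.TTheory GRing.Theory Num.Theory.
Import numFieldNormedType.Exports.
Local Open Scope classical_set_scope.
Local Open Scope ring_scope.

(* Urysohn's lemma provides [g] in C_0(U) equal to 1 on the closure of V.
   Then [m g] lies in M C_0(U), so [m g = a + b] with [a] in F and [b] in
   the complement of F; hence [m = a + (b + (m - m g))].  For [n] in F,
   [<n, m - m g>(x) = <n, m>(x) (1 - g(x))] vanishes: at points of V because
   g is 1 there, and outside V because every element of M C_0(V) vanishes
   there, so that [<n, n>(x) = 0] and therefore [<n, m>(x) = 0]. *)

Lemma locally_compact_hausdorff_locally_compact {X : topologicalType} :
  locally_compact_hausdorff X -> locally_compact [set: X].
Proof.
move=> [hX lcX] x _; rewrite withinET; have [K [nK cK]] := lcX x.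
by exists K => //; split => //; exact: compact_closed.
Qed.

Lemma compact_preimage_Some (X : topologicalType)
    (S : set (one_point_compactification X)) :
  compact S -> ~ S None -> compact (Some @^-1` S).
Proof.
move=> cS nSN G PG GS.
have [[y|] [Sy cly]] := cS _ (fmap_proper_filter Some PG) GS; last by [].
exists y; split => // A B GA nB.
have [_ [[a Aa <-] [b Bb [ba]]]] : (Some @` A) `&` (Some @` B) !=set0.
  apply: cly; last exact: one_point_compactification_some_nbhs.
  have GSA : G (Some @^-1` (Some @` A)) by apply: filterS GA => z Az; exists z.
  exact: GSA.
by exists a; split => //; rewrite -ba.
Qed.

Section Urysohn.
Context {R : realType} {X : topologicalType}.
Hypothesis lchX : locally_compact_hausdorff X.

Let hausdorff_opc : hausdorff_space (one_point_compactification X).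
Proof.
have [hX _] := lchX.
exact: one_point_compactification_hausdorff
  (locally_compact_hausdorff_locally_compact lchX) hX.
Qed.

Lemma opc_urysohn {K U : set X} : compact K -> open U -> K `<=` U ->
  exists f : one_point_compactification X -> R,
    [/\ continuous f, forall p, 0 <= f p <= 1,
        forall x, K x -> f (Some x) = 0 & forall p, ~ (Some @` U) p -> f p = 1].
Proof.
move=> cK oU KU.
have normal_opc : normal_space (one_point_compactification X) :=
  compact_normal hausdorff_opc one_point_compactification_compact.
have cSK : compact (Some @` K : set (one_point_compactification X)).
  apply: continuous_compact => //; apply: continuous_subspaceT.
  exact: one_point_compactification_some_continuous.
have clCU : closed (~` (Some @` U) : set (one_point_compactification X)).
  exact/open_closedC/one_point_compactification_open_some.
have KCU0 : (Some @` K) `&` ~` (Some @` U) = set0 :> set (one_point_compactification X).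
  by apply/seteqP; split => // p [[x Kx <-]]; apply; exists x => //; exact: KU.
have /(@uniform_separatorP _ R) [f [cf f01 fK fCU]] :=
  proj1 (@normal_separatorP R _) normal_opc _ _ (compact_closed hausdorff_opc cSK) clCU KCU0.
exists f; split => // [p|x Kx|p CUp].
- by have := f01 (f p) (ex_intro2 _ _ p I erefl); rewrite /= in_itv.
- by apply: fK; exists (Some x) => //; exists x.
- by apply: fCU; exists p.
Qed.

Lemma C0on_opc_complement (U : set X) (f : one_point_compactification X -> R) :
  continuous f -> (forall p, 0 <= f p <= 1) ->
  (forall p, ~ (Some @` U) p -> f p = 1) ->
  C0on U (fun x => (1 - f (Some x))%:C%C).
Proof.
move=> cf f01 fCU; split; first split.
- move=> x e e0.
  have cfS : {for x, continuous (f \o Some)}.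
    apply: continuous_comp; last exact: cf.
    exact: one_point_compactification_some_continuous.
  apply: filterS (@cvgr_dist_lt _ _ _ _ (nbhs_filter x) _ _ cfS _ e0) => y /=.
  rewrite subr0 expr0n addr0 sqrtr_sqr.
  by have -> : 1 - f (Some y) - (1 - f (Some x)) = f (Some x) - f (Some y) by ring.
- move=> e e0.
  pose S := f @^-1` [set r : R | r <= 1 - e].
  have clS : closed S by apply: preimage_closed; [move=> ? _; exact: cf|exact: closed_le].
  have nSN : ~ S None.
    by rewrite /S /= fCU; [lra|case].
  have -> : [set x | e <= cmod (1 - f (Some x))%:C%C] = Some @^-1` S.
    apply/seteqP; split => x; rewrite /= expr0n /= addr0 sqrtr_sqr ger0_norm ?subr_ge0;
      case/andP: (f01 (Some x)) => // _ _; rewrite /S /=; lra.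
  apply: compact_preimage_Some nSN.
  exact: subclosed_compact clS one_point_compactification_compact _.
- move=> x nUx; rewrite fCU ?subrr // => -[y Uy [yx]].
  by apply: nUx; rewrite -yx.
Qed.

Lemma C0on_urysohn {K U : set X} : compact K -> open U -> K `<=` U ->
  exists g : X -> R[i], C0on U g /\ (forall x, K x -> g x = 1).
Proof.
move=> cK oU KU; have [f [cf f01 fK fCU]] := opc_urysohn cK oU KU.
exists (fun x => (1 - f (Some x))%:C%C); split; first exact: C0on_opc_complement.
by move=> x Kx; rewrite fK ?subr0.
Qed.

End Urysohn.

Section HilbertModule.
Context {R : realType} {X : topologicalType} {M : lmodType R[i]}.
Variable H : hilbert_C0_module X M.

Lemma ipDr a u v x : ip H a (u + v) x = ip H a u x + ip H a v x.
Proof. by have := ip_linear H 1 a u v x; rewrite scale1r mul1r. Qed.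

Lemma ipr0 a x : ip H a 0 x = 0.
Proof. by apply: (addrI (ip H a 0 x)); rewrite addr0 -ipDr addr0. Qed.

Lemma ipZr a k u x : ip H a (k *: u) x = k * ip H a u x.
Proof. by have := ip_linear H k a u 0 x; rewrite addr0 ipr0 addr0. Qed.

Lemma ipBr a u v x : ip H a (u - v) x = ip H a u x - ip H a v x.
Proof. by rewrite ipDr -scaleN1r ipZr mulN1r. Qed.

Lemma ip_sumr a n (F : 'I_n -> M) x :
  ip H a (\sum_(i < n) F i) x = \sum_(i < n) ip H a (F i) x.
Proof. by elim/big_rec2: _ => [|i y1 y2 _ <-]; [exact: ipr0|rewrite ipDr]. Qed.

Lemma cmod_conj (z : R[i]) : cmod z^*%C = cmod z.
Proof. by case: z => a b; rewrite /cmod /= sqrrN. Qed.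

Lemma cmod_ge0 (z : R[i]) : 0 <= cmod z.
Proof. by case: z => a b; rewrite /cmod /= sqrtr_ge0. Qed.

Lemma act_C0on_MC0 m {U : set X} {g : X -> R[i]} : C0on U g -> MC0 H U (act H m g).
Proof.
move=> gU e e0; exists 1%N, (fun=> m), (fun=> g); split=> // x.
by rewrite big_ord1 subrr ipr0 /cmod /= expr0n /= addr0 sqrtr0 ltW.
Qed.

Lemma ip_self_MC0_outside (V : set X) n x :
  MC0 H V n -> ~ V x -> ip H n n x = 0.
Proof.
move=> Vn nVx; apply/Normc.eq0_normc/eqP.
rewrite eq_le cmod_ge0 andbT leNgt; apply/negP => nn_gt0.
have [k [ms [f [fV close_ns]]]] := Vn _ (divr_gt0 nn_gt0 (ltr0Sn _ 1)).
set s := \sum_(i < k) act H (ms i) (f i) in close_ns.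
have ips0 a : ip H a s x = 0.
  rewrite ip_sumr big1 // => i _.
  by rewrite ip_act ?(proj2 (fV i)) ?mulr0 //; exact: (proj1 (fV i)).
(* [s] is invisible at [x], so [<n, n>(x)] is the conjugate of [<n - s, n - s>(x)]. *)
have nn_eq : ip H n n x = (ip H (n - s) (n - s) x)^*%C.
  by rewrite ipBr ips0 subr0 (ip_sym H n (n - s)) conjcK ipBr ips0 subr0.
have := close_ns x; rewrite -cmod_conj -nn_eq /cmod; lra.
Qed.

(* If [c := <n, m>(x)] were nonzero, the vector [w := m + t n] with
   [t := -(<m, m>(x) + 1) / (2 c^* )] would have [<w, w>(x) = -1]. *)
Lemma ip_eq0_of_self_eq0 (n m : M) x : ip H n n x = 0 -> ip H n m x = 0.
Proof.
move=> nn0; set c := ip H n m x; set P := ip H m m x.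
apply/eqP/negP => /negP c_neq0.
have cJ_neq0 : c^*%C != 0 by rewrite conjc_eq0.
have PJ : P^*%C = P by rewrite /P -ip_sym.
pose t := - (P + 1) / (2 * c^*%C).
have tcJ : t * c^*%C = - (P + 1) / 2 by rewrite /t; field.
have tJc : t^*%C * c = - (P + 1) / 2.
  rewrite /t rmorphM rmorphN fmorphV rmorphM rmorphD rmorph1 rmorph_nat /= PJ conjcK.
  by field.
have ww : ip H (m + t *: n) (m + t *: n) x = -1.
  rewrite ipDr ipZr (ip_sym H n) (ip_sym H m) !ipDr !ipZr nn0 mulr0 addr0 -/c -/P.
  rewrite (ip_sym H n m) -/c rmorphD rmorphM /= conjcK PJ -addrA tJc tcJ.
  by field.
by have := ip_pos H (m + t *: n) x; rewrite ww oppr_ge0 ler10.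
Qed.

Lemma ip_MC0_outside {V : set X} {n : M} (m : M) {x : X} :
  MC0 H V n -> ~ V x -> ip H n m x = 0.
Proof. by move=> Vn nVx; apply/ip_eq0_of_self_eq0; exact: ip_self_MC0_outside Vn nVx. Qed.

End HilbertModule.

Theorem lemma6p8 (R : realType) (X : topologicalType) (M : lmodType R[i])
  (H : hilbert_C0_module X M) (U V : set X) (F : set M) :
  locally_compact_hausdorff X ->
  countably_generated H ->
  sigma_compact_open U -> sigma_compact_open V ->
  compactly_contained V U ->
  submodule H F ->
  F `<=` MC0 H V ->
  is_sum (MC0 H U) F (orth H F `&` MC0 H U) ->
  is_sum setT F (orth H F).
Proof.
move=> lchX _ [oU _] _ [cV VU] _ FV sumU m; split=> // _.
have [g [gU g1]] := C0on_urysohn (R := R) lchX cV oU VU.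
have [a [b [Fa [[b_orth _] mg_eq]]]] := proj1 (sumU _) (act_C0on_MC0 H m gU).
exists a, (b + (m - act H m g)); split=> //; split.
- move=> n Fn x; rewrite ipDr b_orth // add0r ipBr ip_act; last exact: gU.1.
  have [Vx|nVx] := pselect (V x).
    by rewrite g1 ?mulr1 ?subrr //; exact: subset_closure.
  by rewrite (ip_MC0_outside H m (FV _ Fn) nVx) mul0r subrr.
- by rewrite addrA -mg_eq addrC subrK.
Qed.
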